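(* Let $G$ be a right $\ell$-group with a strong order unit $s$, and let $g \in G^-$. Put $k = \min\{ i \geq 0 : g \geq s^{-i}\}$. Then $g$ has a unique left-normal factorization $g = h_1 h_2 \cdots h_k$. Its factors are \[ h_i = (g \curlyvee s^{-(i-1)})^{-1}(g \curlyvee s^{-i}) \qquad (1 \leq i \leq k), \] where $a \curlyvee b := (a^{-1} \wedge b^{-1})^{-1}$.
   Context: A right $\ell$-group is a group $G$ (identity $e$) with a partial order $\leq$ that is right-invariant ($x \leq y \Rightarrow xz \leq yz$) and under which $G$ is a lattice with meet $\wedge$ and join $\vee$. $G^- := \{g \in G : g \leq e\}$, and $[a,b] := \{x : a \leq x \leq b\}$. An element $s$ is normal if $x \mapsto sx$ is a lattice automorphism of $G$. It is a strong order unit if $s > e$, $s$ is normal, and every $g \in G$ satisfies $g \leq s^k$ for some $k \in \mathbb{Z}$. For $g \in G^-$, a left-normal factorization of $g$ is a finite sequence $h_1,\dots,h_k \in [s^{-1},e]$ satisfying three conditions: (1) $g = h_1 \cdots h_{k-1} h_k$; (2) $h_i \neq e$ for all $i$; (3) for each $1 \leq i < k$ there do not exist $h,h' \in G^-$ with $h \neq e$, $hh' = h_{i+1}$ and $h_i h \in [s^{-1},e]$. *)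

From Stdlib Require Import ZArith List Arith.
Import ListNotations.
Set Implicit Arguments.

Record right_lgroup := RightLGroup {
  car :> Type;
  gmul : car -> car -> car;
  ginv : car -> car;
  gone : car;
  gle : car -> car -> Prop;
  gmeet : car -> car -> car;
  gjoin : car -> car -> car;
  gmulA : forall x y z, gmul x (gmul y z) = gmul (gmul x y) z;
  gmul1l : forall x, gmul gone x = x;
  gmul1r : forall x, gmul x gone = x;
  gmulVl : forall x, gmul (ginv x) x = gone;
  gmulVr : forall x, gmul x (ginv x) = gone;
  gle_refl : forall x, gle x x;
  gle_antisym : forall x y, gle x y -> gle y x -> x = y;
  gle_trans : forall x y z, gle x y -> gle y z -> gle x z;
  gle_mulr : forall x y z, gle x y -> gle (gmul x z) (gmul y z);
  gmeet_l : forall x y, gle (gmeet x y) x;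
  gmeet_r : forall x y, gle (gmeet x y) y;
  gmeet_glb : forall x y z, gle z x -> gle z y -> gle z (gmeet x y);
  gjoin_l : forall x y, gle x (gjoin x y);
  gjoin_r : forall x y, gle y (gjoin x y);
  gjoin_lub : forall x y z, gle x z -> gle y z -> gle (gjoin x y) z
}.

Arguments gmul {r}.
Arguments ginv {r}.
Arguments gle {r}.
Arguments gmeet {r}.
Arguments gjoin {r}.
Arguments gone r : assert.

Section Defs.
Context {G : right_lgroup}.

Definition npow (x : G) (n : nat) : G := Nat.iter n (@gmul G x) (gone G).
Definition zpow (x : G) (z : Z) : G :=
  match z with
  | Z0 => gone G
  | Zpos p => npow x (Pos.to_nat p)
  | Zneg p => ginv (npow x (Pos.to_nat p))
  end.

Definition negcone (g : G) : Prop := gle g (gone G).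
Definition interval (a b x : G) : Prop := gle a x /\ gle x b.

Definition bijective (f : G -> G) : Prop :=
  exists f' : G -> G, (forall x, f' (f x) = x) /\ (forall y, f (f' y) = y).

Definition lattice_automorphism (f : G -> G) : Prop :=
  bijective f /\
  (forall x y, f (gmeet x y) = gmeet (f x) (f y)) /\
  (forall x y, f (gjoin x y) = gjoin (f x) (f y)).

Definition normal (s : G) : Prop := lattice_automorphism (fun x => @gmul G s x).

Definition strong_order_unit (s : G) : Prop :=
  gle (gone G) s /\ s <> gone G /\ normal s /\
  forall g : G, exists k : Z, gle g (zpow s k).

Definition curlyvee (a b : G) : G := ginv (gmeet (ginv a) (ginv b)).

Definition prodl (hs : list G) : G := fold_right (@gmul G) (gone G) hs.

(* left-normal factorization of g with respect to s; factors are
   hs = [h_1; ...; h_k], with h_i = nth (i-1) hs. *)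
Definition left_normal_factorization (s g : G) (hs : list G) : Prop :=
  (forall h, In h hs -> interval (ginv s) (gone G) h) /\
  g = prodl hs /\
  (forall h, In h hs -> h <> gone G) /\
  (forall i, S i < length hs ->
     ~ exists h h' : G, negcone h /\ negcone h' /\ h <> gone G /\
         gmul h h' = nth (S i) hs (gone G) /\
         interval (ginv s) (gone G) (gmul (nth i hs (gone G)) h)).

End Defs.

From Stdlib Require Import ZArith List Arith Lia Classical Wf_nat.
Import ListNotations.

(* Write x ≼ y when y⁻¹ ≤ x⁻¹: this order is left-invariant and a ⋎ b is its
   join.  Normality of s makes right multiplication by s⁻¹ a ≼-automorphism, and
   makes ≤ and ≼ agree on comparisons s⁻ⁿ ≤ x.
   Existence: the chain e = g ⋎ s⁰ ≽ g ⋎ s⁻¹ ≽ ... ≽ g ⋎ s⁻ᵏ = g telescopes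
   into factors lying in [s⁻¹, e]; once two consecutive terms agree the chain is
   constant, so the k factors are nontrivial, and condition (3) holds because
   g ⋎ s⁻⁽ⁱ⁺¹⁾ is the ≼-largest candidate for the (i+1)-st prefix product.
   Uniqueness: in a left-normal factorization h₁ ⋯ hₘ of g the first factor is
   h₁ = g ⋎ s⁻¹, and inductively the i-th prefix product is g ⋎ s⁻ⁱ; so the
   factors are forced, and m is the least exponent with s⁻ᵐ ≤ g. *)

Local Notation "x · y" := (gmul x y) (at level 40, left associativity).

Section Group.
Context {G : right_lgroup}.
Implicit Types x y z : G.

Lemma mulKg x y : ginv x · (x · y) = y.
Proof. rewrite gmulA, gmulVl, gmul1l; reflexivity. Qed.

Lemma mulKVg x y : x · (ginv x · y) = y.
Proof. rewrite gmulA, gmulVr, gmul1l; reflexivity. Qed.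

Lemma mulgK x y : y · x · ginv x = y.
Proof. rewrite <- gmulA, gmulVr, gmul1r; reflexivity. Qed.

Lemma mulgKV x y : y · ginv x · x = y.
Proof. rewrite <- gmulA, gmulVl, gmul1r; reflexivity. Qed.

Lemma mulgI x y z : x · y = x · z -> y = z.
Proof. intro E. rewrite <- (mulKg x y), E, mulKg. reflexivity. Qed.

Lemma invg_uniq x y : x · y = gone G -> y = ginv x.
Proof. intro E. apply (mulgI x). rewrite E, gmulVr. reflexivity. Qed.

Lemma invgK x : ginv (ginv x) = x.
Proof. symmetry. apply invg_uniq, gmulVl. Qed.

Lemma invMg x y : ginv (x · y) = ginv y · ginv x.
Proof.
  symmetry. apply invg_uniq.
  rewrite <- gmulA, (gmulA _ y), gmulVr, gmul1l, gmulVr. reflexivity.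
Qed.

Lemma invg1 : ginv (gone G) = gone G.
Proof. symmetry. apply invg_uniq, gmul1l. Qed.

Lemma invg_inj x y : ginv x = ginv y -> x = y.
Proof. intro E. rewrite <- (invgK x), E, invgK. reflexivity. Qed.

Lemma gle_mul2r x y z : gle x y <-> gle (x · z) (y · z).
Proof.
  split; intro H.
  - apply gle_mulr, H.
  - rewrite <- (mulgK z x), <- (mulgK z y). apply gle_mulr, H.
Qed.

Lemma gmeet_idl x y : gle x y -> gmeet x y = x.
Proof. intro H. apply gle_antisym; [apply gmeet_l | apply gmeet_glb; auto using gle_refl]. Qed.

Lemma npowS x n : npow x (S n) = x · npow x n.
Proof. reflexivity. Qed.

Lemma npowSr x n : npow x (S n) = npow x n · x.
Proof.
  induction n as [|n IH].
  - simpl. rewrite gmul1r, gmul1l. reflexivity.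
  - rewrite npowS, IH at 1. rewrite gmulA. reflexivity.
Qed.

Lemma invg_npow x n : ginv (npow x n) = npow (ginv x) n.
Proof.
  induction n as [|n IH].
  - apply invg1.
  - rewrite npowS, invMg, IH, npowSr. reflexivity.
Qed.

Lemma zpow_opp_nat x n : zpow x (- Z.of_nat n)%Z = npow (ginv x) n.
Proof.
  destruct n as [|n]; [reflexivity|].
  change (- Z.of_nat (S n))%Z with (Zneg (Pos.of_succ_nat n)). unfold zpow.
  rewrite SuccNat2Pos.id_succ. apply invg_npow.
Qed.

Lemma prodl_le1 (hs : list G) :
  (forall h, In h hs -> gle h (gone G)) -> gle (prodl hs) (gone G).
Proof.
  induction hs as [|h hs IH]; intro H; simpl.
  - apply gle_refl.
  - eapply gle_trans; [apply gle_mulr, H; left; reflexivity|].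
    rewrite gmul1l. apply IH. intros; apply H; right; assumption.
Qed.

Lemma prodl_firstn_S (hs : list G) j : j < length hs ->
  prodl (firstn (S j) hs) = prodl (firstn j hs) · nth j hs (gone G).
Proof.
  revert j. induction hs as [|h hs IH]; intros j Hj; simpl in Hj; [lia|].
  destruct j as [|j].
  - simpl. rewrite gmul1r, gmul1l. reflexivity.
  - change (prodl (firstn (S (S j)) (h :: hs))) with (h · prodl (firstn (S j) hs)).
    rewrite IH by lia. simpl. apply gmulA.
Qed.

End Group.

Lemma nth_map_seq0 {A : Type} (f : nat -> A) (d : A) k j : j < k ->
  nth j (map f (seq 0 k)) d = f j.
Proof.
  intro Hj. rewrite (nth_indep _ d (f 0)) by (rewrite length_map, length_seq; lia).
  rewrite map_nth, seq_nth by lia. reflexivity.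
Qed.

Definition lle {G : right_lgroup} (x y : G) : Prop := gle (ginv y · x) (gone G).

Local Notation "x ≼ y" := (lle x y) (at level 70).

Section LeftOrder.
Context {G : right_lgroup}.
Implicit Types a b c x y z : G.

Lemma lle_ginv x y : x ≼ y <-> gle (ginv y) (ginv x).
Proof. unfold lle. rewrite (gle_mul2r _ _ (ginv x)), mulgK, gmul1l. reflexivity. Qed.

Lemma lle_refl x : x ≼ x.
Proof. apply lle_ginv, gle_refl. Qed.

Lemma lle_trans x y z : x ≼ y -> y ≼ z -> x ≼ z.
Proof. rewrite !lle_ginv. intros; eapply gle_trans; eauto. Qed.

Lemma lle_antisym x y : x ≼ y -> y ≼ x -> x = y.
Proof. rewrite !lle_ginv. intros; apply invg_inj, gle_antisym; assumption. Qed.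

Lemma lle_mul2l x y z : x ≼ y <-> z · x ≼ z · y.
Proof. unfold lle. rewrite invMg, <- gmulA, mulKg. reflexivity. Qed.

Lemma lle_le1 x : x ≼ gone G <-> gle x (gone G).
Proof. unfold lle. rewrite invg1, gmul1l. reflexivity. Qed.

Lemma ge1_lle x : gone G ≼ x <-> gle (gone G) x.
Proof. unfold lle. rewrite gmul1r, (gle_mul2r _ _ x), gmulVl, gmul1l. reflexivity. Qed.

Lemma curlyvee_ubl a b : a ≼ curlyvee a b.
Proof. apply lle_ginv. unfold curlyvee. rewrite invgK. apply gmeet_l. Qed.

Lemma curlyvee_ubr a b : b ≼ curlyvee a b.
Proof. apply lle_ginv. unfold curlyvee. rewrite invgK. apply gmeet_r. Qed.

Lemma curlyvee_lub a b c : a ≼ c -> b ≼ c -> curlyvee a b ≼ c.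
Proof. rewrite !lle_ginv. unfold curlyvee. rewrite invgK. apply gmeet_glb. Qed.

Lemma curlyvee_idl a b : b ≼ a -> curlyvee a b = a.
Proof.
  intro H. apply lle_antisym; [apply curlyvee_lub; auto using lle_refl | apply curlyvee_ubl].
Qed.

Lemma curlyvee_idr a b : a ≼ b -> curlyvee a b = b.
Proof.
  intro H. apply lle_antisym; [apply curlyvee_lub; auto using lle_refl | apply curlyvee_ubr].
Qed.

Lemma curlyvee_monor a b b' : b ≼ b' -> curlyvee a b ≼ curlyvee a b'.
Proof.
  intro H. apply curlyvee_lub; [apply curlyvee_ubl|].
  eapply lle_trans; [exact H | apply curlyvee_ubr].
Qed.

Lemma curlyvee_absorb a b c : b ≼ a -> curlyvee a (curlyvee b c) = curlyvee a c.
Proof.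
  intro H. apply lle_antisym.
  - apply curlyvee_lub; [apply curlyvee_ubl|].
    apply curlyvee_lub; [eapply lle_trans; [exact H | apply curlyvee_ubl] | apply curlyvee_ubr].
  - apply curlyvee_lub; [apply curlyvee_ubl|].
    eapply lle_trans; [apply curlyvee_ubr | apply curlyvee_ubr].
Qed.

Lemma curlyvee_iso (f f' : G -> G) :
  (forall x, f' (f x) = x) -> (forall x, f (f' x) = x) ->
  (forall x y, x ≼ y <-> f x ≼ f y) ->
  forall a b, f (curlyvee a b) = curlyvee (f a) (f b).
Proof.
  intros Hf'f Hff' Hf a b. apply lle_antisym.
  - rewrite <- (Hff' (curlyvee (f a) (f b))). apply (proj1 (Hf _ _)).
    apply curlyvee_lub; apply (proj2 (Hf _ _)); rewrite Hff';
      [apply curlyvee_ubl | apply curlyvee_ubr].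
  - apply curlyvee_lub; apply (proj1 (Hf _ _)); [apply curlyvee_ubl | apply curlyvee_ubr].
Qed.

Lemma curlyvee_mull z a b : z · curlyvee a b = curlyvee (z · a) (z · b).
Proof.
  apply (curlyvee_iso (fun x => z · x) (fun x => ginv z · x)).
  - intros; apply mulKg.
  - intros; apply mulKVg.
  - intros; apply lle_mul2l.
Qed.

End LeftOrder.

Section NormalUnit.
Context {G : right_lgroup} (s : G).
Hypothesis s_normal : normal s.
Hypothesis s_ge1 : gle (gone G) s.
Implicit Types a b g h x y : G.

Lemma le_mul2l_normal x y : gle x y <-> gle (s · x) (s · y).
Proof.
  destruct s_normal as [_ [Hmeet _]]. split; intro H.
  - rewrite <- (gmeet_idl _ _ H), Hmeet. apply gmeet_r.
  - pose proof (gmeet_idl _ _ H) as E. rewrite <- Hmeet in E.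
    apply mulgI in E. rewrite <- E. apply gmeet_r.
Qed.

Lemma le_mul2l_invs x y : gle x y <-> gle (ginv s · x) (ginv s · y).
Proof. rewrite (le_mul2l_normal (ginv s · x)), !mulKVg. reflexivity. Qed.

Lemma le_mul2l_npow n x y :
  gle x y <-> gle (npow (ginv s) n · x) (npow (ginv s) n · y).
Proof.
  induction n as [|n IH].
  - simpl. rewrite !gmul1l. reflexivity.
  - rewrite npowS, <- !gmulA, <- le_mul2l_invs. exact IH.
Qed.

(* Conjugation by s preserves ≤, since s · z ≤ s · e iff z ≤ e. *)
Lemma lle_mul2r_invs x y : x ≼ y <-> x · ginv s ≼ y · ginv s.
Proof.
  unfold lle. rewrite invMg, invgK.
  replace (s · ginv y · (x · ginv s)) with (s · (ginv y · x) · ginv s)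
    by (rewrite !gmulA; reflexivity).
  rewrite (gle_mul2r (s · (ginv y · x) · ginv s) _ s), mulgKV, gmul1l.
  rewrite <- (gmul1r _ s) at 2. rewrite <- le_mul2l_normal. reflexivity.
Qed.

Lemma curlyvee_mulr_invs a b :
  curlyvee a b · ginv s = curlyvee (a · ginv s) (b · ginv s).
Proof.
  apply (curlyvee_iso (fun x => x · ginv s) (fun x => x · s)).
  - intros; apply mulgKV.
  - intros; apply mulgK.
  - intros; apply lle_mul2r_invs.
Qed.

Lemma curlyvee_mulr_npow n a b :
  curlyvee a b · npow (ginv s) n
  = curlyvee (a · npow (ginv s) n) (b · npow (ginv s) n).
Proof.
  induction n as [|n IH].
  - simpl. rewrite !gmul1r. reflexivity.
  - rewrite npowSr, !gmulA, IH, curlyvee_mulr_invs. reflexivity.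
Qed.

Lemma npow_le_lle n x : gle (npow (ginv s) n) x <-> npow (ginv s) n ≼ x.
Proof.
  unfold lle.
  rewrite (gle_mul2r _ _ (ginv x)), gmulVr, (gle_mul2r _ _ (npow (ginv s) n)), gmul1l.
  rewrite (le_mul2l_npow n (ginv x · npow (ginv s) n)), gmul1r, gmulA.
  reflexivity.
Qed.

Lemma invs_le_lle x : gle (ginv s) x <-> ginv s ≼ x.
Proof. pose proof (npow_le_lle 1 x) as H. simpl in H. rewrite gmul1r in H. exact H. Qed.

Lemma invs_le1 : gle (ginv s) (gone G).
Proof. rewrite (gle_mul2r _ _ s), gmulVl, gmul1l. exact s_ge1. Qed.

Lemma npow_invs_lleS n : npow (ginv s) (S n) ≼ npow (ginv s) n.
Proof.
  rewrite npowSr. rewrite <- (gmul1r _ (npow (ginv s) n)) at 2.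
  apply lle_mul2l, lle_le1, invs_le1.
Qed.

Lemma npow_invs_antitone m n : m <= n -> npow (ginv s) n ≼ npow (ginv s) m.
Proof.
  induction 1 as [|n _ IH]; [apply lle_refl|].
  eapply lle_trans; [apply npow_invs_lleS | exact IH].
Qed.

(* [factor g j] is the paper's h_(j+1); [prefix g i] is the product h_1 ⋯ h_i. *)
Definition prefix g n : G := curlyvee g (npow (ginv s) n).

Definition factor g j : G := ginv (prefix g j) · prefix g (S j).

Lemma prefix0 g : gle g (gone G) -> prefix g 0 = gone G.
Proof. intro Hg. apply curlyvee_idr, lle_le1, Hg. Qed.

Lemma prefix_id g k : gle (npow (ginv s) k) g -> prefix g k = g.
Proof. intro Hk. apply curlyvee_idl, npow_le_lle, Hk. Qed.

Lemma prefix_lleS g j : prefix g (S j) ≼ prefix g j.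
Proof. apply curlyvee_monor, npow_invs_lleS. Qed.

Lemma prefix_mulr_invs g j : prefix g j · ginv s ≼ prefix g (S j).
Proof.
  unfold prefix. rewrite curlyvee_mulr_invs. apply curlyvee_lub.
  - eapply lle_trans; [|apply curlyvee_ubl]. rewrite <- (gmul1r _ g) at 2.
    apply lle_mul2l, lle_le1, invs_le1.
  - rewrite <- npowSr. apply curlyvee_ubr.
Qed.

Lemma prefix_stepS g j :
  prefix g j = prefix g (S j) -> prefix g (S j) = prefix g (S (S j)).
Proof.
  intro E. apply lle_antisym; [|apply prefix_lleS].
  apply curlyvee_lub; [apply curlyvee_ubl|].
  eapply lle_trans; [|apply prefix_mulr_invs]. rewrite <- E, npowSr.
  apply (proj1 (lle_mul2r_invs _ _)), curlyvee_ubr.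
Qed.

Lemma prefix_stable g j :
  prefix g j = prefix g (S j) -> forall m, prefix g j = prefix g (j + m).
Proof.
  intros E m.
  enough (prefix g j = prefix g (j + m) /\ prefix g (j + m) = prefix g (S (j + m)))
    by tauto.
  induction m as [|m [IH1 IH2]].
  - rewrite Nat.add_0_r. auto.
  - rewrite <- plus_n_Sm. split; [congruence | apply prefix_stepS, IH2].
Qed.

Lemma prodl_factors g m n :
  prodl (map (factor g) (seq m n)) = ginv (prefix g m) · prefix g (m + n).
Proof.
  revert m. induction n as [|n IH]; intro m; simpl.
  - rewrite Nat.add_0_r, gmulVl. reflexivity.
  - rewrite IH. unfold factor. rewrite <- gmulA, mulKVg, <- plus_n_Sm. reflexivity.
Qed.

Lemma factor_interval g j : interval (ginv s) (gone G) (factor g j).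
Proof.
  unfold factor. split.
  - apply invs_le_lle, (lle_mul2l _ _ (prefix g j)). rewrite mulKVg.
    apply prefix_mulr_invs.
  - apply lle_le1, (lle_mul2l _ _ (prefix g j)). rewrite mulKVg, gmul1r.
    apply prefix_lleS.
Qed.

(* Condition (3) for consecutive factors: prefix (S j) · h is an upper bound of
   g (through h · h' = factor (S j)) and of s⁻⁽ʲ⁺²⁾ (through factor j · h ≥ s⁻¹). *)
Lemma factor_maximal g j h h' : negcone h -> negcone h' ->
  h · h' = factor g (S j) -> interval (ginv s) (gone G) (factor g j · h) ->
  h = gone G.
Proof.
  intros Hh Hh' E [Hlow _]. unfold factor in E, Hlow.
  assert (Ec : prefix g (S j) · (h · h') = prefix g (S (S j)))
    by (rewrite E; apply mulKVg).
  apply gle_antisym; [exact Hh|]. apply ge1_lle.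
  apply (lle_mul2l _ _ (prefix g (S j))). rewrite gmul1r.
  apply curlyvee_lub.
  - apply lle_trans with (prefix g (S (S j))); [apply curlyvee_ubl|].
    rewrite <- Ec, gmulA. rewrite <- (gmul1r _ (prefix g (S j) · h)) at 2.
    apply lle_mul2l, lle_le1, Hh'.
  - rewrite npowSr. apply lle_trans with (prefix g j · ginv s).
    + apply (proj1 (lle_mul2r_invs _ _)), curlyvee_ubr.
    + replace (prefix g (S j) · h)
        with (prefix g j · (ginv (prefix g j) · prefix g (S j) · h))
        by (rewrite <- !gmulA, mulKVg; reflexivity).
      apply lle_mul2l, invs_le_lle, Hlow.
Qed.

Lemma lnf_factors g k : gle g (gone G) -> gle (npow (ginv s) k) g ->
  (forall i, i < k -> ~ gle (npow (ginv s) i) g) ->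
  left_normal_factorization s g (map (factor g) (seq 0 k)).
Proof.
  intros Hg Hk Hmin.
  assert (Hnontriv : forall j, j < k -> factor g j <> gone G).
  { intros j Hj E.
    assert (Ej : prefix g j = prefix g (S j))
      by (rewrite <- (mulKVg (prefix g j) (prefix g (S j))); unfold factor in E;
          rewrite E, gmul1r; reflexivity).
    pose proof (prefix_stable g j Ej (k - j)) as Ejk.
    replace (j + (k - j)) with k in Ejk by lia. rewrite (prefix_id g k Hk) in Ejk.
    apply (Hmin j Hj), npow_le_lle. rewrite <- Ejk. apply curlyvee_ubr. }
  split; [|split; [|split]].
  - intros h Hh. apply in_map_iff in Hh. destruct Hh as [j [<- _]].
    apply factor_interval.
  - rewrite prodl_factors, prefix0, invg1, gmul1l by exact Hg.
    symmetry. apply prefix_id, Hk.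
  - intros h Hh. apply in_map_iff in Hh. destruct Hh as [j [<- Hj]].
    apply in_seq in Hj. apply Hnontriv. lia.
  - intros i Hi [h [h' [Hh [Hh' [Hne [E Hint]]]]]].
    rewrite length_map, length_seq in Hi.
    rewrite nth_map_seq0 in E, Hint by lia.
    exact (Hne (factor_maximal g i h h' Hh Hh' E Hint)).
Qed.

Definition factors_in_interval (hs : list G) : Prop :=
  forall h, In h hs -> interval (ginv s) (gone G) h.

Definition left_normal (hs : list G) : Prop :=
  forall i, S i < length hs ->
     ~ exists h h' : G, negcone h /\ negcone h' /\ h <> gone G /\
         gmul h h' = nth (S i) hs (gone G) /\
         interval (ginv s) (gone G) (gmul (nth i hs (gone G)) h).

Lemma factors_in_interval_tail h hs :
  factors_in_interval (h :: hs) -> factors_in_interval hs.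
Proof. intros H x Hx. apply H. right; exact Hx. Qed.

Lemma left_normal_tail h hs : left_normal (h :: hs) -> left_normal hs.
Proof. intros H i Hi. apply (H (S i)). simpl. lia. Qed.

(* If h were strictly ≼-above c := (h · h₂ ⋯ hₘ) ⋎ s⁻¹, the nontrivial element
   h⁻¹ c could be moved from h₂ onto h, contradicting condition (3). *)
Lemma lnf_head h hs : factors_in_interval (h :: hs) -> left_normal (h :: hs) ->
  h = curlyvee (h · prodl hs) (ginv s).
Proof.
  revert h. induction hs as [|h2 hs IH]; intros h HI HL.
  - simpl. rewrite gmul1r. symmetry. apply curlyvee_idl, invs_le_lle.
    apply (HI h). left; reflexivity.
  - assert (Eh2 : h2 = curlyvee (prodl (h2 :: hs)) (ginv s))
      by (apply IH; [eapply factors_in_interval_tail | eapply left_normal_tail]; eassumption).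
    assert (Hh : interval (ginv s) (gone G) h) by (apply HI; left; reflexivity).
    assert (Htail : gle (prodl (h2 :: hs)) (gone G))
      by (apply prodl_le1; intros x Hx; apply HI; right; exact Hx).
    set (c := curlyvee (h · prodl (h2 :: hs)) (ginv s)) in *.
    assert (Hch : c ≼ h).
    { apply curlyvee_lub.
      - rewrite <- (gmul1r _ h) at 2. apply lle_mul2l, lle_le1, Htail.
      - apply invs_le_lle, Hh. }
    destruct (classic (ginv h · c = gone G)) as [E|Hne].
    + rewrite <- (mulKVg h c), E, gmul1r. reflexivity.
    + exfalso. apply (HL 0); [simpl; lia|].
      exists (ginv h · c), (ginv (ginv h · c) · h2).
      split; [|split; [|split; [|split]]].
      * apply lle_le1, (lle_mul2l _ _ h). rewrite mulKVg, gmul1r. exact Hch.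
      * apply lle_le1, (lle_mul2l _ _ (ginv h · c)). rewrite mulKVg, gmul1r.
        rewrite Eh2. apply curlyvee_lub; apply (lle_mul2l _ _ h); rewrite mulKVg.
        -- apply curlyvee_ubl.
        -- apply lle_trans with (ginv s); [|apply curlyvee_ubr].
           rewrite <- (gmul1l _ (ginv s)) at 2.
           apply (proj1 (lle_mul2r_invs _ _)), lle_le1, Hh.
      * exact Hne.
      * apply mulKVg.
      * simpl. rewrite mulKVg. split.
        -- apply invs_le_lle, curlyvee_ubr.
        -- apply lle_le1. apply lle_trans with h; [exact Hch | apply lle_le1, Hh].
Qed.

Lemma lnf_prefix hs : factors_in_interval hs -> left_normal hs ->
  forall i, i <= length hs ->
  prodl (firstn i hs) = curlyvee (prodl hs) (npow (ginv s) i).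
Proof.
  induction hs as [|h hs IH]; intros HI HL i Hi.
  - simpl in Hi. replace i with 0 by lia. simpl. symmetry. apply curlyvee_idl, lle_refl.
  - destruct i as [|i].
    + symmetry. apply curlyvee_idr, lle_le1, (prodl_le1 (h :: hs)).
      intros x Hx. apply HI, Hx.
    + simpl firstn. simpl prodl at 1.
      rewrite IH; [| eapply factors_in_interval_tail; eassumption
                   | eapply left_normal_tail; eassumption | simpl in Hi; lia].
      rewrite curlyvee_mull. rewrite (lnf_head h hs HI HL) at 2.
      rewrite curlyvee_mulr_npow, <- npowS.
      change (prodl (h :: hs)) with (h · prodl hs).
      apply curlyvee_absorb.
      rewrite <- (gmul1r _ (h · prodl hs)) at 2.
      apply lle_mul2l, (npow_invs_antitone 0); lia.
Qed.

Lemma lnf_nth g hs : left_normal_factorization s g hs ->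
  forall j, j < length hs -> nth j hs (gone G) = factor g j.
Proof.
  intros [HI [Hprod [_ HL]]] j Hj.
  pose proof (lnf_prefix hs HI HL) as Hpre. rewrite <- Hprod in Hpre.
  pose proof (prodl_firstn_S hs j Hj) as E.
  rewrite !Hpre in E by lia. fold (prefix g j) (prefix g (S j)) in E.
  unfold factor. rewrite E, mulKg. reflexivity.
Qed.

Lemma lnf_eq_factors g hs : left_normal_factorization s g hs ->
  hs = map (factor g) (seq 0 (length hs)).
Proof.
  intro Hlnf. apply nth_ext with (gone G) (gone G).
  - rewrite length_map, length_seq. reflexivity.
  - intros j Hj. rewrite nth_map_seq0 by exact Hj. apply (lnf_nth g hs Hlnf j Hj).
Qed.

Lemma lnf_length_min g hs : left_normal_factorization s g hs ->
  gle (npow (ginv s) (length hs)) g /\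
  forall i, i < length hs -> ~ gle (npow (ginv s) i) g.
Proof.
  intro Hlnf. pose proof Hlnf as [HI [Hprod [Hnontriv HL]]]. split.
  - pose proof (lnf_prefix hs HI HL (length hs) (le_n _)) as E.
    rewrite firstn_all, <- Hprod in E.
    apply npow_le_lle. rewrite E. apply curlyvee_ubr.
  - intros i Hi Hle.
    assert (HleS : gle (npow (ginv s) (S i)) g).
    { apply npow_le_lle. eapply lle_trans; [apply npow_invs_lleS | apply npow_le_lle, Hle]. }
    apply (Hnontriv (nth i hs (gone G))); [apply nth_In, Hi|].
    rewrite (lnf_nth g hs Hlnf i Hi). unfold factor.
    rewrite !prefix_id by assumption. apply gmulVl.
Qed.

End NormalUnit.

Lemma strong_order_unit_bound {G : right_lgroup} (s g : G) :
  strong_order_unit s -> exists n, gle (npow (ginv s) n) g.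
Proof.
  intros [Hs1 [_ [Hs Hbound]]]. destruct (Hbound (ginv g)) as [z Hz].
  assert (Hle1 : gle (ginv g) (gone G) -> exists n, gle (npow (ginv s) n) g).
  { intro H. exists 0. simpl. rewrite (gle_mul2r _ _ g), gmulVl, gmul1l in H. exact H. }
  destruct z as [|p|p]; simpl in Hz.
  - apply Hle1, Hz.
  - exists (Pos.to_nat p). rewrite <- invg_npow.
    rewrite (gle_mul2r _ _ g), gmulVl in Hz.
    rewrite (le_mul2l_npow s Hs (Pos.to_nat p)), <- invg_npow, mulKg, gmul1r in Hz.
    exact Hz.
  - apply Hle1. eapply gle_trans; [exact Hz|]. rewrite invg_npow.
    apply lle_le1, (npow_invs_antitone s Hs1 0). lia.
Qed.

Lemma exists_min_exponent {G : right_lgroup} (s g : G) : strong_order_unit s ->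
  exists k, gle (npow (ginv s) k) g /\
            forall i, i < k -> ~ gle (npow (ginv s) i) g.
Proof.
  intro Hsu.
  destruct (dec_inh_nat_subset_has_unique_least_element
              (fun n => gle (npow (ginv s) n) g) (fun n => classic _)
              (strong_order_unit_bound s g Hsu)) as [k [[Hk Hleast] _]].
  exists k. split; [exact Hk|]. intros i Hi Hle. specialize (Hleast i Hle). lia.
Qed.

Theorem mainTheorem2 (G : right_lgroup) (s g : G) :
  strong_order_unit s -> negcone g ->
  exists k : nat,
    (* k = min { i >= 0 : g >= s^{-i} } *)
    gle (zpow s (- Z.of_nat k)%Z) g /\
    (forall i : nat, (i < k)%nat -> ~ gle (zpow s (- Z.of_nat i)%Z) g) /\
    (* the factors h_i = (g ⋎ s^{-(i-1)})^{-1} (g ⋎ s^{-i}), 1 <= i <= k *)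
    let hs := map (fun i : nat =>
                gmul (ginv (curlyvee g (zpow s (- Z.of_nat (i - 1))%Z)))
                     (curlyvee g (zpow s (- Z.of_nat i)%Z)))
              (seq 1 k) in
    left_normal_factorization s g hs /\
    (forall hs' : list G, left_normal_factorization s g hs' -> hs' = hs).
Proof.
  intros Hsu Hg.
  destruct (exists_min_exponent s g Hsu) as [k [Hk Hmin]].
  destruct Hsu as [Hs1 [_ [Hs _]]].
  exists k. rewrite !zpow_opp_nat. split; [exact Hk|split].
  { intros i Hi. rewrite zpow_opp_nat. apply Hmin, Hi. }
  replace (map _ (seq 1 k)) with (map (factor s g) (seq 0 k)).
  2:{ rewrite <- seq_shift, map_map. apply map_ext. intro j.
      rewrite !zpow_opp_nat. simpl (S j - 1). rewrite Nat.sub_0_r. reflexivity. }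
  split.
  - apply lnf_factors; assumption.
  - intros hs' Hlnf. rewrite (lnf_eq_factors s Hs Hs1 g hs' Hlnf).
    destruct (lnf_length_min s Hs Hs1 g hs' Hlnf) as [Hk' Hmin'].
    destruct (Nat.lt_total k (length hs')) as [Hlt|[<-|Hlt]].
    + exfalso. exact (Hmin' k Hlt Hk).
    + reflexivity.
    + exfalso. exact (Hmin _ Hlt Hk').
Qed.
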